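(* Let $q$ be a prime number and $\mathbb{A}=\mathbb{Q}\cap[-1,0[$. Then $\mathbb{A}\text{-}\mathcal{KS}(q^{2})=\emptyset$.
   Context: Every nonzero rational $\alpha$ is written $\alpha=\alpha_1/\alpha_2$ with $\alpha_1\in\mathbb{Z}$, $\alpha_2$ a positive integer and $\gcd(\alpha_1,\alpha_2)=1$. For an integer $N\ge 2$ and a nonzero rational $\alpha=\alpha_1/\alpha_2$, $N$ is called an $\alpha$-Korselt number if $N\neq\alpha$ and $\alpha_2p-\alpha_1$ divides $\alpha_2N-\alpha_1$ (in $\mathbb{Z}$) for every prime divisor $p$ of $N$. For a subset $\mathbb{A}\subseteq\mathbb{Q}$, $\mathbb{A}\text{-}\mathcal{KS}(N)$ denotes the set of all $\beta\in\mathbb{A}\setminus\{0,N\}$ such that $N$ is a $\beta$-Korselt number. $[-1,0[$ denotes the half-open interval $\{x:-1\le x<0\}$. *)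

From mathcomp Require Import all_boot all_order all_algebra.
Set Implicit Arguments. Unset Strict Implicit. Unset Printing Implicit Defensive.
Import Order.TTheory GRing.Theory Num.Theory.
Local Open Scope ring_scope.

(* alpha = numq alpha / denq alpha with denq > 0 and coprime: MathComp's
   normal form of a rational, i.e. alpha_1 = numq alpha, alpha_2 = denq alpha. *)

Definition korselt (N : nat) (alpha : rat) : Prop :=
  (2 <= N)%N /\ alpha != 0 /\ alpha != (N%:R : rat) /\
  forall p : nat, prime p -> (p %| N)%N ->
    ((denq alpha * p%:Z - numq alpha) %| (denq alpha * N%:Z - numq alpha))%Z.

Definition KS (A : rat -> Prop) (N : nat) (beta : rat) : Prop :=
  A beta /\ beta != 0 /\ beta != (N%:R : rat) /\ korselt N beta.

Definition A_m10 (x : rat) : Prop := -1 <= x /\ x < 0.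

From mathcomp Require Import all_boot all_order all_algebra.
From mathcomp Require Import zify ring.
Import Order.TTheory GRing.Theory Num.Theory.
Local Open Scope ring_scope.

(* Write beta = -a/b with 1 <= a <= b.  Korselt's condition at the prime q of
   N = q^2 asks that b q + a divide b q^2 + a, hence also
   q (b q + a) - (b q^2 + a) = a (q - 1).  But 0 < a (q - 1) < b q + a, so no
   such divisibility can hold. *)

Lemma gtzNdvd (d m : int) : 0 < m < d -> ~~ (d %| m)%Z.
Proof.
case/andP=> m_gt0 lt_md; rewrite dvdzE gtnNdvd //; lia.
Qed.

Lemma ndvdz_Korselt_sqr (a b q : int) : 0 < a <= b -> 1 < q ->
  ~~ (b * q + a %| b * q ^+ 2 + a)%Z.
Proof.
case/andP=> a_gt0 le_ab q_gt1; apply/negP=> dvd_sqr.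
have dvd_diff : (b * q + a %| a * (q - 1))%Z.
  have -> : a * (q - 1) = (b * q + a) * q - (b * q ^+ 2 + a) by ring.
  by rewrite rpredB ?dvdz_mulr.
by move: dvd_diff; apply/negP/gtzNdvd; apply/andP; split; nia.
Qed.

Lemma oppr_numq_gt0_le_denq (x : rat) : -1 <= x -> x < 0 ->
  0 < - numq x <= denq x.
Proof.
move=> x_ge x_lt; rewrite oppr_gt0 numq_lt0 x_lt /= lerNl.
move: x_ge; rewrite -[x in -1 <= x]divq_num_den ler_pdivlMr ?ltr0z ?denq_gt0 //.
by rewrite mulN1r -rmorphN ler_int.
Qed.

Theorem corollary5p8 (q : nat) : prime q ->
  forall beta : rat, ~ KS A_m10 (q ^ 2)%N beta.
Proof.
move=> q_prime beta [[beta_ge beta_lt] [_ [_ [_ [_ [_ korselt_at]]]]]].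
have := korselt_at q q_prime (dvdn_exp2l q (isT : (1 <= 2)%N)).
rewrite -!natz natrX; apply/negP/ndvdz_Korselt_sqr.
  exact: oppr_numq_gt0_le_denq.
by rewrite ltr1n prime_gt1.
Qed.
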